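(* Let $m\ge 1$, $C>0$, let $\mathbf{y}\in\{-1,1\}^m$, let $\mathbf{Q}\in\mathbb{R}^{m\times m}$ be a symmetric positive semidefinite kernel matrix on the labeled nodes and let $Q_{t1},\dots,Q_{tm}\in\mathbb{R}$ be the kernel values between a test node $t$ and the labeled nodes. Let $\boldsymbol{\alpha}^*\in\mathcal{S}(\mathbf{y})$ and $\hat p_t=\sum_{i=1}^m y_i\alpha_i^*Q_{ti}$, and assume $\hat p_t\neq 0$. For $i\in[m]$ set $M_{u_i}=\sum_{j=1}^m C|Q_{ij}|-1$ and $M_{v_i}=\sum_{j=1}^m C|Q_{ij}|+1$. Consider the mixed-integer linear program $$P(\mathbf{y}):\ \min\ \operatorname{sign}(\hat p_t)\sum_{i=1}^m z_iQ_{ti}$$ over $\boldsymbol{\alpha},\tilde{\mathbf{y}},\mathbf{z},\mathbf{u},\mathbf{v}\in\mathbb{R}^m$, $\mathbf{y}',\mathbf{s},\mathbf{t}\in\{0,1\}^m$, $\mathbf{R}\in\mathbb{R}^{m\times m}$, subject to: $\sum_{i=1}^m(1-y_i\tilde y_i)\le 2\lfloor\epsilon m\rfloor$; and for all $i,j\in[m]$: $\tilde y_i=2y'_i-1$; $\sum_{j=1}^m R_{ij}Q_{ij}-1-u_i+v_i=0$; $u_i\ge0$, $v_i\ge 0$; $-C(1+\tilde y_i)\le R_{ij}+z_j\le C(1+\tilde y_i)$; $-C(1-\tilde y_i)\le R_{ij}-z_j\le C(1-\tilde y_i)$; $-\alpha_i\le z_i\le\alpha_i$; $\alpha_i-C(1-\tilde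 y_i)\le z_i\le C(1+\tilde y_i)-\alpha_i$; $u_i\le M_{u_i}s_i$; $\alpha_i\le C(1-s_i)$; $v_i\le M_{v_i}t_i$; $\alpha_i\ge Ct_i$. Then the prediction for node $t$ is certifiably robust against $\mathcal{A}(\mathbf{y})$ if the optimal value of $P(\mathbf{y})$ is greater than zero, and it is not certifiably robust otherwise. Equivalently, the optimal value of $P(\mathbf{y})$ equals $\min\{\operatorname{sign}(\hat p_t)\sum_{i=1}^m\tilde y_i\alpha_iQ_{ti} : \tilde{\mathbf{y}}\in\mathcal{A}(\mathbf{y}),\ \boldsymbol{\alpha}\in\mathcal{S}(\tilde{\mathbf{y}})\}$.
   Context: Binary classification with $m$ labeled nodes. For a label vector $\tilde{\mathbf{y}}\in\{-1,1\}^m$, the (bias-free) kernel SVM dual problem is $D(\tilde{\mathbf{y}}):\ \min_{\boldsymbol\alpha\in\mathbb{R}^m}-\sum_{i=1}^m\alpha_i+\tfrac12\sum_{i,j=1}^m\tilde y_i\tilde y_j\alpha_i\alpha_jQ_{ij}$ subject to $0\le\alpha_i\le C$ for all $i\in[m]$; $\mathcal{S}(\tilde{\mathbf{y}})$ denotes its set of optimal solutions. Given $\boldsymbol\alpha\in\mathcal{S}(\tilde{\mathbf{y}})$, the SVM's prediction score for a node $t$ is $p_t=\sum_{i=1}^m\tilde y_i\alpha_iQ_{ti}$ and its predicted class is $\operatorname{sign}(p_t)$. The adversary with budget $\epsilon\in[0,1]$ may choose any $\tilde{\mathbf{y}}\in\mathcal{A}(\mathbf{y})=\{\tilde{\mathbf{y}}\in\{-1,1\}^m:\|\tilde{\mathbf{y}}-\mathbf{y}\|_0\le\lfloor\epsilon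 m\rfloor\}$. The prediction for $t$ is certifiably robust if $\operatorname{sign}(\hat p_t)\,p_t>0$ for every $\tilde{\mathbf{y}}\in\mathcal{A}(\mathbf{y})$ and every $\boldsymbol\alpha\in\mathcal{S}(\tilde{\mathbf{y}})$ (a score of $0$ counts as a changed prediction). When $\mathbf{Q}$ is the neural tangent kernel of a network, this SVM coincides with the infinite-width network trained with soft-margin (hinge) loss and regularization constant $C$. *)

From HB Require Import structures.
From mathcomp Require Import all_boot all_order all_algebra.
From mathcomp Require Import reals.
Set Implicit Arguments. Unset Strict Implicit. Unset Printing Implicit Defensive.
Import Order.TTheory GRing.Theory Num.Theory.
Local Open Scope ring_scope.

Section Defs.
Variable R : realType.
Variable m : nat.

Definition is_label (y : 'I_m -> R) : Prop := forall i, y i = 1 \/ y i = -1.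

Definition is_binary (b : 'I_m -> R) : Prop := forall i, b i = 0 \/ b i = 1.

Definition sym_psd (Q : 'M[R]_m) : Prop :=
  (forall i j, Q i j = Q j i) /\
  (forall x : 'I_m -> R, 0 <= \sum_i \sum_j x i * x j * Q i j).

(* Dual objective of the bias-free kernel SVM D(yt). *)
Definition dual_obj (Q : 'M[R]_m) (yt a : 'I_m -> R) : R :=
  - (\sum_i a i) + 2^-1 * \sum_i \sum_j yt i * yt j * a i * a j * Q i j.

Definition dual_feasible (C : R) (a : 'I_m -> R) : Prop :=
  forall i, 0 <= a i <= C.

Definition svm_opt (C : R) (Q : 'M[R]_m) (yt a : 'I_m -> R) : Prop :=
  dual_feasible C a /\
  forall b, dual_feasible C b -> dual_obj Q yt a <= dual_obj Q yt b.

Definition score (qt yt a : 'I_m -> R) : R := \sum_i yt i * a i * qt i.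

Definition budget (eps : R) : int := Num.floor (eps * m%:R).

Definition admissible (eps : R) (y yt : 'I_m -> R) : Prop :=
  is_label yt /\ (#|[set i | yt i != y i]|%:Z <= budget eps)%R.

Definition cert_robust (eps C : R) (Q : 'M[R]_m) (qt y : 'I_m -> R) (phat : R) : Prop :=
  forall yt a, admissible eps y yt -> svm_opt C Q yt a ->
    0 < Num.sg phat * score qt yt a.

Definition Mu (C : R) (Q : 'M[R]_m) (i : 'I_m) : R := \sum_j C * `|Q i j| - 1.
Definition Mv (C : R) (Q : 'M[R]_m) (i : 'I_m) : R := \sum_j C * `|Q i j| + 1.

Definition milp_feasible (eps C : R) (Q : 'M[R]_m) (y : 'I_m -> R)
  (a yt z u v yp s t : 'I_m -> R) (Rm : 'M[R]_m) : Prop :=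
  is_binary yp /\ is_binary s /\ is_binary t /\
  \sum_i (1 - y i * yt i) <= 2 * (budget eps)%:~R /\
  (forall i, yt i = 2 * yp i - 1) /\
  (forall i, \sum_j Rm i j * Q i j - 1 - u i + v i = 0) /\
  (forall i, 0 <= u i /\ 0 <= v i) /\
  (forall i j, - (C * (1 + yt i)) <= Rm i j + z j <= C * (1 + yt i)) /\
  (forall i j, - (C * (1 - yt i)) <= Rm i j - z j <= C * (1 - yt i)) /\
  (forall i, - a i <= z i <= a i) /\
  (forall i, a i - C * (1 - yt i) <= z i <= C * (1 + yt i) - a i) /\
  (forall i, u i <= Mu C Q i * s i) /\
  (forall i, a i <= C * (1 - s i)) /\
  (forall i, v i <= Mv C Q i * t i) /\
  (forall i, C * t i <= a i).

Definition milp_obj (qt : 'I_m -> R) (phat : R) (z : 'I_m -> R) : R :=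
  Num.sg phat * \sum_i z i * qt i.

Definition milp_opt_value (eps C : R) (Q : 'M[R]_m) (qt y : 'I_m -> R) (phat val : R) : Prop :=
  (exists a yt z u v yp s t Rm,
      milp_feasible eps C Q y a yt z u v yp s t Rm /\ milp_obj qt phat z = val) /\
  (forall a yt z u v yp s t Rm,
      milp_feasible eps C Q y a yt z u v yp s t Rm -> val <= milp_obj qt phat z).

Definition adv_opt_value (eps C : R) (Q : 'M[R]_m) (qt y : 'I_m -> R) (phat val : R) : Prop :=
  (exists yt a, admissible eps y yt /\ svm_opt C Q yt a /\
                Num.sg phat * score qt yt a = val) /\
  (forall yt a, admissible eps y yt -> svm_opt C Q yt a ->
                val <= Num.sg phat * score qt yt a).

End Defs.

From HB Require Import structures.
From mathcomp Require Import all_boot all_order all_algebra.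
From mathcomp Require Import reals.
From mathcomp Require Import ring lra.
From mathcomp Require Import boolp classical_sets topology normedtype derive.
Set Implicit Arguments. Unset Strict Implicit. Unset Printing Implicit Defensive.
Import Order.TTheory GRing.Theory Num.Theory.
Import numFieldNormedType.Exports.
Local Open Scope ring_scope.

(* A solution alpha of the box-constrained dual D(yt) is optimal iff it satisfies the KKT
   conditions: with g_i = yt_i sum_j yt_j alpha_j Q_ij - 1 the partial derivative of the
   objective, g_i >= 0 where alpha_i < C and g_i <= 0 where alpha_i > 0 (necessity by a
   coordinate perturbation, sufficiency by convexity since Q is PSD).  The constraints of
   P(y) encode exactly these conditions: the McCormick constraints force z_i = yt_i alpha_i
   and R_ij = yt_i z_j, so the equality constraint reads g_i = u_i - v_i, and the big-M
   constraints on the binaries s, t express complementarity; M_u and M_v are valid because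
   |g_i + 1| <= sum_j C |Q_ij|.  Feasible points of P(y) thus correspond to pairs
   yt in A(y), alpha in S(yt), with objective sign(phat) p_t.  The minimum over these pairs
   is attained: each S(yt) is a nonempty compact set and A(y) is finite. *)

Section DualObjective.
Variables (R : realType) (m : nat) (Q : 'M[R]_m) (yt : 'I_m -> R).
Hypothesis Qsym : forall i j, Q i j = Q j i.

Definition dual_form (a b : 'I_m -> R) : R :=
  \sum_i \sum_j yt i * yt j * a i * b j * Q i j.

Definition dual_grad (a : 'I_m -> R) (i : 'I_m) : R :=
  \sum_j yt i * yt j * a j * Q i j - 1.

Lemma dual_formC a b : dual_form a b = dual_form b a.
Proof.
rewrite /dual_form exchange_big /=; apply: eq_bigr => i _; apply: eq_bigr => j _.
by rewrite Qsym; ring.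
Qed.

Lemma dual_form_grad a d : dual_form d a = \sum_i d i * (dual_grad a i + 1).
Proof.
apply: eq_bigr => i _; rewrite /dual_grad subrK mulr_sumr.
by apply: eq_bigr => j _; ring.
Qed.

Lemma dual_form_ge0 d : sym_psd Q -> 0 <= dual_form d d.
Proof.
move=> [_ /(_ (fun i => yt i * d i))]; rewrite /dual_form.
congr (_ <= _); apply: eq_bigr => i _; apply: eq_bigr => j _; ring.
Qed.

Lemma dual_objB a b (d := fun i => b i - a i) :
  dual_obj Q yt b - dual_obj Q yt a =
  \sum_i d i * dual_grad a i + 2^-1 * dual_form d d.
Proof.
have bE : \sum_i \sum_j yt i * yt j * b i * b j * Q i j =
    dual_form a a + dual_form a d + dual_form d a + dual_form d d.
  rewrite /dual_form -!big_split /=; apply: eq_bigr => i _; rewrite -!big_split /=.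
  by apply: eq_bigr => j _; rewrite /d; ring.
have sumbE : \sum_i b i = \sum_i a i + \sum_i d i.
  by rewrite -big_split /=; apply: eq_bigr => i _; rewrite /d; ring.
have sumdE : \sum_i d i * (dual_grad a i + 1) = \sum_i d i * dual_grad a i + \sum_i d i.
  by rewrite -big_split /=; apply: eq_bigr => i _; ring.
by rewrite /dual_obj bE (dual_formC a d) (dual_form_grad a d) sumbE sumdE /dual_form; field.
Qed.

Lemma dual_obj_coord a i h (b := fun k => a k + (if k == i then h else 0)) :
  dual_obj Q yt b - dual_obj Q yt a =
  h * dual_grad a i + 2^-1 * (yt i * yt i * Q i i * (h * h)).
Proof.
have dE k : b k - a k = (if k == i then h else 0) by rewrite /b; ring.
have delta (F : 'I_m -> R) : \sum_k (if k == i then h else 0) * F k = h * F i.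
  by rewrite (bigD1 i) //= eqxx big1 ?addr0 // => k /negbTE ->; rewrite mul0r.
rewrite dual_objB /dual_form.
have -> : \sum_k (b k - a k) * dual_grad a k = h * dual_grad a i.
  by under eq_bigr do rewrite dE; exact: delta.
have -> : \sum_k \sum_l yt k * yt l * (b k - a k) * (b l - a l) * Q k l =
    h * (h * (yt i * yt i * Q i i)).
  transitivity (\sum_k (if k == i then h else 0) *
      \sum_l (if l == i then h else 0) * (yt k * yt l * Q k l)).
    apply: eq_bigr => k _; rewrite mulr_sumr; apply: eq_bigr => l _; rewrite !dE.
    by move: (if k == i then h else 0) (if l == i then h else 0) => x w; ring.
  by under eq_bigr do rewrite delta; rewrite delta.
by ring.
Qed.

End DualObjective.

Lemma small_positive_step (R : realFieldType) (r g K : R) :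
  0 < r -> 0 < g -> 0 <= K -> exists2 h, 0 < h <= r & h * (K + 1) <= g.
Proof.
move=> r0 g0 K0; have K1 : 0 < K + 1 by lra.
have [rg|gr] := leP r (g / (K + 1)).
  by exists r; [apply/andP; split | rewrite -ler_pdivlMr].
exists (g / (K + 1)); last by rewrite divfK ?gt_eqF.
by apply/andP; split; [rewrite divr_gt0 | exact: ltW].
Qed.

Section SVMOptimality.
Variables (R : realType) (m : nat) (C : R) (Q : 'M[R]_m) (yt : 'I_m -> R).
Hypothesis Qsym : forall i j, Q i j = Q j i.

Definition svm_kkt (a : 'I_m -> R) : Prop :=
  dual_feasible C a /\
  forall i, (a i < C -> 0 <= dual_grad Q yt a i) /\ (0 < a i -> dual_grad Q yt a i <= 0).

Lemma svm_opt_coord a i h : svm_opt C Q yt a -> 0 <= a i + h <= C ->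
  0 <= h * dual_grad Q yt a i + 2^-1 * (yt i * yt i * Q i i * (h * h)).
Proof.
move=> [fa opt] ahC; rewrite -(dual_obj_coord _ Qsym) subr_ge0; apply: opt => k.
by case: eqP => [->|_] //; rewrite addr0; exact: fa.
Qed.

Lemma svm_opt_kkt a : svm_opt C Q yt a -> svm_kkt a.
Proof.
(* A violated condition yields a feasible coordinate step h with h (|Q_ii| + 1) <= |g_i|,
   along which the first-order term h g_i beats the quadratic one. *)
move=> o; split => [|i]; first by case: o.
set g := dual_grad Q yt a i; set c := yt i * yt i * Q i i.
have c_le h : c * (h * h) <= `|c| * (h * h).
  by apply: ler_wpM2r; [rewrite -expr2 sqr_ge0 | exact: ler_norm].
have [a0 aC] := andP (o.1 i).
split => H; rewrite leNgt; apply/negP => Hg.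
- have [h /andP[h0 hr] hg] := small_positive_step (r := C - a i) (g := - g)
    ltac:(lra) ltac:(lra) (normr_ge0 c).
  have hb : 0 <= a i + h <= C by apply/andP; split; lra.
  have := svm_opt_coord o hb; rewrite -/g -/c; have := c_le h; nra.
- have [h /andP[h0 hr] hg] := small_positive_step (r := a i) (g := g)
    ltac:(lra) ltac:(lra) (normr_ge0 c).
  have hb : 0 <= a i + - h <= C by apply/andP; split; lra.
  have := svm_opt_coord o hb; rewrite -/g -/c; have := c_le h; nra.
Qed.

Lemma kkt_svm_opt a : sym_psd Q -> svm_kkt a -> svm_opt C Q yt a.
Proof.
move=> psdQ [fa kkt]; split => // b fb.
rewrite -subr_ge0 dual_objB; last by case: psdQ.
apply: addr_ge0; last by apply: mulr_ge0; [lra | exact: dual_form_ge0].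
apply: sumr_ge0 => i _.
have [a0 aC] := andP (fa i); have [b0 bC] := andP (fb i); have [k1 k2] := kkt i.
have [gneg|gpos|->] := ltgtP (dual_grad Q yt a i) 0; last by rewrite mulr0.
- have -> : a i = C by apply/eqP; rewrite eq_le aC leNgt; apply/negP => /k1; lra.
  nra.
- have -> : a i = 0 by apply/eqP; rewrite eq_le a0 andbT leNgt; apply/negP => /k2; lra.
  nra.
Qed.

End SVMOptimality.

Section Linearization.
Variables (R : realFieldType) (C : R).

(* Exact McCormick linearizations of the product of a label l = 2 y' - 1 with
   a bounded variable. *)
Lemma mccormick_nonneg (l a z : R) : (l = 1 \/ l = -1) -> 0 <= a <= C ->
  (- a <= z <= a) /\ (a - C * (1 - l) <= z <= C * (1 + l) - a) <-> z = l * a.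
Proof.
move=> lE /andP[a0 aC]; split.
  by case: lE => -> [/andP[? ?] /andP[? ?]]; lra.
by case: lE => -> ->; split; apply/andP; split; lra.
Qed.

Lemma label_mul_norm_le (l a : R) : (l = 1 \/ l = -1) -> 0 <= a <= C -> `|l * a| <= C.
Proof. by move=> lE /andP[a0 aC]; case: lE => ->; rewrite ?mulN1r ?mul1r ?normrN ger0_norm. Qed.

Lemma mccormick_sym (l z r : R) : (l = 1 \/ l = -1) -> `|z| <= C ->
  (- (C * (1 + l)) <= r + z <= C * (1 + l)) /\ (- (C * (1 - l)) <= r - z <= C * (1 - l))
  <-> r = l * z.
Proof.
move=> lE; rewrite ler_norml => /andP[zl zu]; split.
  by case: lE => -> [/andP[? ?] /andP[? ?]]; lra.
by case: lE => -> ->; split; apply/andP; split; lra.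
Qed.

Lemma bigM_complementarity (a g u v s t Mu Mv : R) :
  0 < C -> (s = 0 \/ s = 1) -> (t = 0 \/ t = 1) -> 0 <= a -> 0 <= u -> 0 <= v ->
  g = u - v -> u <= Mu * s -> a <= C * (1 - s) -> v <= Mv * t -> C * t <= a ->
  (a < C -> 0 <= g) /\ (0 < a -> g <= 0).
Proof.
move=> C0 sE tE a0 u0 v0 -> uM aM vM tM.
by case: sE tE uM aM vM tM => -> [] -> *; split => *; lra.
Qed.

Lemma complementarity_bigM (a g K : R) : 0 <= a <= C -> `|g + 1| <= K ->
  (a < C -> 0 <= g) -> (0 < a -> g <= 0) ->
  [/\ Num.max g 0 <= (K - 1) * (if 0 < g then 1 else 0), a <= C * (1 - (if 0 < g then 1 else 0)),
      Num.max (- g) 0 <= (K + 1) * (if g < 0 then 1 else 0) & C * (if g < 0 then 1 else 0) <= a].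
Proof.
move=> /andP[a0 aC]; rewrite ler_norml => /andP[gl gu] kC k0.
have [gneg|gpos|->] := ltgtP g 0; rewrite ?ltxx /=.
- have aCe : a = C by apply/eqP; rewrite eq_le aC leNgt; apply/negP => /kC; lra.
  by rewrite max_l; [split; lra | lra].
- have a0e : a = 0 by apply/eqP; rewrite eq_le a0 andbT leNgt; apply/negP => /k0; lra.
  by rewrite max_r; [split; lra | lra].
- by rewrite oppr0 maxxx; split; lra.
Qed.

End Linearization.

Lemma sum_label_mismatch (R : realType) (m : nat) (y yt : 'I_m -> R) :
  is_label y -> is_label yt ->
  \sum_i (1 - y i * yt i) = 2 * #|[set i | yt i != y i]|%:R.
Proof.
move=> ly lyt; rewrite -sum1_card natr_sum mulr_sumr [RHS]big_mkcond /=.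
apply: eq_bigr => i _; rewrite inE; have [->|ne] /= := eqVneq (yt i) (y i).
  by case: (ly i) => ->; lra.
case: (ly i) (lyt i) ne => -> [] ->; rewrite ?eqxx // => _; lra.
Qed.

Lemma admissibleE (R : realType) (m : nat) (eps : R) (y yt : 'I_m -> R) :
  is_label y -> admissible eps y yt <->
  is_label yt /\ \sum_i (1 - y i * yt i) <= 2 * (budget m eps)%:~R.
Proof.
move=> ly; split=> -[lyt hb]; split=> //; move: hb;
  by rewrite sum_label_mismatch // ler_pM2l // -[_%:R]/((_%:Z)%:~R) ler_int.
Qed.

Section MILP.
Variables (R : realType) (m : nat) (eps C : R) (Q : 'M[R]_m) (y : 'I_m -> R).
Hypotheses (ly : is_label y) (psdQ : sym_psd Q).

Lemma dual_grad_bound yt a i : is_label yt -> dual_feasible C a ->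
  `|dual_grad Q yt a i + 1| <= \sum_j C * `|Q i j|.
Proof.
move=> lyt fa; rewrite /dual_grad subrK.
apply: le_trans (ler_norm_sum _ _ _) _; apply: ler_sum => j _.
have [a0 aC] := andP (fa j).
have ny k : `|yt k| = 1 by case: (lyt k) => ->; rewrite ?normrN normr1.
by rewrite !normrM !ny !mul1r (ger0_norm a0) ler_wpM2r.
Qed.

Lemma milp_feasible_adv a yt z u v yp s t Rm : 0 < C ->
  milp_feasible eps C Q y a yt z u v yp s t Rm ->
  [/\ admissible eps y yt, svm_opt C Q yt a & forall i, z i = yt i * a i].
Proof.
move=> C0 [byp [bs [bt [hb [hyt [hg [huv [hR1 [hR2 [hz1 [hz2 [hu [has [hv hat]]]]]]]]]]]]]].
have lyt : is_label yt by move=> i; rewrite hyt; case: (byp i) => ->; [right|left]; ring.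
have fa : dual_feasible C a.
  move=> i; have /andP[za az] := hz1 i; have := has i.
  by case: (bs i) => -> ?; apply/andP; split; lra.
have zE i : z i = yt i * a i :=
  (mccormick_nonneg (z i) (lyt i) (fa i)).1 (conj (hz1 i) (hz2 i)).
have zC j : `|z j| <= C by rewrite zE; exact: label_mul_norm_le (lyt j) (fa j).
have RmE i j : Rm i j = yt i * z j :=
  (mccormick_sym (Rm i j) (lyt i) (zC j)).1 (conj (hR1 i j) (hR2 i j)).
have gradE i : dual_grad Q yt a i = u i - v i.
  suff : \sum_j Rm i j * Q i j = dual_grad Q yt a i + 1 by have := hg i; lra.
  by rewrite /dual_grad subrK; apply: eq_bigr => j _; rewrite RmE zE; ring.
split => //; first exact/admissibleE.
apply: kkt_svm_opt => //; split => // i; have /andP[a0 _] := fa i; have [u0 v0] := huv i.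
exact: bigM_complementarity C0 (bs i) (bt i) a0 u0 v0 (gradE i) (hu i) (has i) (hv i) (hat i).
Qed.

Lemma adv_milp_feasible yt a : admissible eps y yt -> svm_opt C Q yt a ->
  exists u v yp s t Rm, milp_feasible eps C Q y a yt (fun i => yt i * a i) u v yp s t Rm.
Proof.
move=> /(admissibleE eps yt ly)[lyt hb] o; have [fa kkt] := svm_opt_kkt psdQ.1 o.
pose g := dual_grad Q yt a.
have bigM i := complementarity_bigM (fa i) (dual_grad_bound i lyt fa) (kkt i).1 (kkt i).2.
have zC j : `|yt j * a j| <= C := label_mul_norm_le (lyt j) (fa j).
exists (fun i => Num.max (g i) 0), (fun i => Num.max (- g i) 0), (fun i => (yt i + 1) / 2),
  (fun i => if 0 < g i then 1 else 0), (fun i => if g i < 0 then 1 else 0),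
  (\matrix_(i, j) (yt i * (yt j * a j))).
split; first by move=> i /=; case: (lyt i) => ->; [right|left]; field.
split; first by move=> i /=; case: ifP; [right|left].
split; first by move=> i /=; case: ifP; [right|left].
split => //.
split; first by move=> i /=; field.
split.
  move=> i /=; have -> : \sum_j (\matrix_(i, j) (yt i * (yt j * a j))) i j * Q i j = g i + 1.
    by rewrite /g /dual_grad subrK; apply: eq_bigr => j _; rewrite mxE; ring.
  by case: (leP (g i) 0) => ?; case: (leP (- g i) 0) => ?; lra.
split; first by move=> i /=; split; rewrite le_max lexx orbT.
split; first by move=> i j /=; rewrite mxE; have [] := (mccormick_sym _ (lyt i) (zC j)).2 erefl.
split; first by move=> i j /=; rewrite mxE; have [] := (mccormick_sym _ (lyt i) (zC j)).2 erefl.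
split; first by move=> i /=; have [] := (mccormick_nonneg _ (lyt i) (fa i)).2 erefl.
split; first by move=> i /=; have [] := (mccormick_nonneg _ (lyt i) (fa i)).2 erefl.
by do ![split]; move=> i; case: (bigM i).
Qed.

End MILP.

Local Open Scope classical_set_scope.

Section PointwiseContinuity.
Variables (R : realType) (T : topologicalType).

Lemma continuous_sumr (I : Type) (r : seq I) (F : I -> T -> R) :
  (forall i, continuous (F i)) -> continuous (fun x => \sum_(i <- r) F i x).
Proof. by move=> cF; apply: continuous_big => [|i _]; [exact: add_continuous | exact: cF]. Qed.

Lemma continuous_addr (f g : T -> R) :
  continuous f -> continuous g -> continuous (fun x => f x + g x).
Proof. by move=> cf cg x; apply: continuousD; [exact: cf | exact: cg]. Qed.

Lemma continuous_oppr (f : T -> R) : continuous f -> continuous (fun x => - f x).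
Proof. by move=> cf x; apply: continuousN; exact: cf. Qed.

Lemma continuous_mulr (f g : T -> R) :
  continuous f -> continuous g -> continuous (fun x => f x * g x).
Proof. by move=> cf cg x; apply: continuousM; [exact: cf | exact: cg]. Qed.

End PointwiseContinuity.

Section Minimizers.
Variables (R : realType) (m : nat) (C : R) (Q : 'M[R]_m) (yt : 'I_m -> R).

Definition row_fun (v : 'rV[R]_m) : 'I_m -> R := fun i => v ord0 i.

Lemma row_funK (a : 'I_m -> R) : row_fun (\row_i a i) = a.
Proof. by apply/funext => i; rewrite /row_fun mxE. Qed.

Lemma dual_obj_continuous : continuous (fun v => dual_obj Q yt (row_fun v)).
Proof.
apply: continuous_addr.
  by apply: continuous_oppr; apply: continuous_sumr => i; exact: coord_continuous.
apply: continuous_mulr; first exact: cst_continuous.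
do 2 apply: continuous_sumr => ?.
by repeat apply: continuous_mulr; (exact: cst_continuous || exact: coord_continuous).
Qed.

Lemma score_continuous (qt : 'I_m -> R) : continuous (fun v => score qt yt (row_fun v)).
Proof.
apply: continuous_sumr => i.
by repeat apply: continuous_mulr; (exact: cst_continuous || exact: coord_continuous).
Qed.

Lemma exists_minimizer (S : set 'rV[R]_m) (f : 'rV[R]_m -> R) :
  S !=set0 -> compact S -> continuous f -> exists2 v, S v & forall w, S w -> f v <= f w.
Proof.
move=> S0 cS cf; have [v Sv minv] := EVT_min_rV S0 cS (continuous_subspaceT cf).
by exists v => [|w Sw]; [rewrite -inE | apply: minv; rewrite inE].
Qed.

Lemma feasible_set_compact : compact [set v | dual_feasible C (row_fun v)].
Proof.
have -> : [set v | dual_feasible C (row_fun v)] = [set v | forall i, `[0, C] (v ord0 i)].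
  by apply/seteqP; split => v fv i; move: (fv i); rewrite /= in_itv.
by apply: (@rV_compact _ _ (fun=> `[0, C]%classic)) => i; exact: segment_compact.
Qed.

Lemma svm_opt_set_compact : compact [set v | svm_opt C Q yt (row_fun v)].
Proof.
have optE : [set v | svm_opt C Q yt (row_fun v)] =
    [set v | dual_feasible C (row_fun v)] `&`
    \bigcap_(b in dual_feasible C) [set v | dual_obj Q yt (row_fun v) <= dual_obj Q yt b].
  by apply/seteqP; split => v [fv ov]; split => // b fb; exact: ov.
apply: (subclosed_compact _ feasible_set_compact); last by rewrite optE; exact: subIsetl.
rewrite optE; apply: closedI; first exact: compact_closed feasible_set_compact.
apply: closed_bigI => b _.
apply: (@preimage_closed _ _ _ [set x | x <= dual_obj Q yt b]); last exact: closed_le.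
by move=> v _; exact: dual_obj_continuous.
Qed.

Lemma exists_svm_opt : 0 <= C -> exists a, svm_opt C Q yt a.
Proof.
move=> C0; have feas0 : [set v | dual_feasible C (row_fun v)] !=set0.
  by exists 0 => i; rewrite /row_fun mxE lexx.
have [v fv minv] := exists_minimizer feas0 feasible_set_compact dual_obj_continuous.
exists (row_fun v); split => // b fb.
by rewrite -(row_funK b); apply: minv; rewrite /= row_funK.
Qed.

Lemma exists_svm_opt_min_score (qt : 'I_m -> R) (k : R) : 0 <= C ->
  exists a, svm_opt C Q yt a /\
    forall b, svm_opt C Q yt b -> k * score qt yt a <= k * score qt yt b.
Proof.
move=> C0; have [a oa] := exists_svm_opt C0.
have opt0 : [set v | svm_opt C Q yt (row_fun v)] !=set0.
  by exists (\row_i a i); rewrite /= row_funK.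
have [v ov minv] := exists_minimizer (f := fun v => k * score qt yt (row_fun v))
  opt0 svm_opt_set_compact (continuous_mulr (@cst_continuous _ _ k) (@score_continuous qt)).
exists (row_fun v); split => // b ob.
by rewrite -(row_funK b); apply: minv; rewrite /= row_funK.
Qed.

End Minimizers.

Local Close Scope classical_set_scope.

Definition label_of (R : realType) (m : nat) (b : {ffun 'I_m -> bool}) : 'I_m -> R :=
  fun i => if b i then 1 else -1.
Arguments label_of {R m} b i.

Lemma label_ofK (R : realType) (m : nat) (yt : 'I_m -> R) :
  is_label yt -> label_of [ffun i => yt i == 1] = yt.
Proof.
move=> lyt; apply/funext => i; rewrite /label_of ffunE.
case: (lyt i) => ->; rewrite ?eqxx // ifF //; apply/negbTE.
by rewrite -subr_eq0 -opprD oppr_eq0 (_ : 1 + 1 = 2%:R) ?pnatr_eq0.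
Qed.

Lemma label_of_label (R : realType) (m : nat) (b : {ffun 'I_m -> bool}) :
  is_label (label_of (R := R) b).
Proof. by move=> i; rewrite /label_of; case: (b i); [left|right]. Qed.

Lemma exists_adv_opt_value (R : realType) (m : nat) (eps C : R) (Q : 'M[R]_m)
    (qt y : 'I_m -> R) (phat : R) :
  0 <= C -> 0 <= eps -> is_label y -> exists val, adv_opt_value eps C Q qt y phat val.
Proof.
move=> C0 e0 ly; set k := Num.sg phat.
pose adv_value b a := k * score qt (label_of (R := R) b) a.
have /choice[opt_of opt_ofP] b := exists_svm_opt_min_score Q (label_of (R := R) b) qt k C0.
pose admissible_b b := (#|[set i | label_of (R := R) b i != y i]|%:Z <= budget m eps)%R.
have admE b : admissible eps y (label_of (R := R) b) <-> admissible_b b.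
  by split => [[]|?] //; split => //; exact: label_of_label.
have by0 : admissible_b [ffun i => y i == 1].
  rewrite /admissible_b label_ofK //.
  have -> : #|[set i | y i != y i]| = 0%N by apply: eq_card0 => i; rewrite !inE eqxx.
  by rewrite floor_ge0 mulr_ge0.
case: (arg_minP (fun b => adv_value b (opt_of b)) by0).
move=> bmin adm_bmin minP; exists (adv_value bmin (opt_of bmin)); split.
  exists (label_of bmin), (opt_of bmin).
  by split; [exact/admE | exact: (conj (opt_ofP _).1 erefl)].
move=> yt a /[dup] ad [lyt _] oa; rewrite -(label_ofK lyt) in ad oa *.
by apply: le_trans (minP _ ((admE _).1 ad)) _; exact: (opt_ofP _).2.
Qed.

Lemma milp_obj_score (R : realType) (m : nat) (qt yt a z : 'I_m -> R) (phat : R) :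
  (forall i, z i = yt i * a i) -> milp_obj qt phat z = Num.sg phat * score qt yt a.
Proof. by move=> zE; rewrite /milp_obj /score; under eq_bigr do rewrite zE. Qed.

Theorem theorem1 (R : realType) (m : nat) (C eps : R) (y : 'I_m -> R)
    (Q : 'M[R]_m) (qt : 'I_m -> R) (astar : 'I_m -> R) :
  (0 < m)%N -> 0 < C -> 0 <= eps <= 1 ->
  is_label y -> sym_psd Q ->
  svm_opt C Q y astar ->
  score qt y astar != 0 ->
  exists val : R,
    milp_opt_value eps C Q qt y (score qt y astar) val /\
    (cert_robust eps C Q qt y (score qt y astar) <-> 0 < val) /\
    adv_opt_value eps C Q qt y (score qt y astar) val.
Proof.
move=> _ C0 /andP[e0 _] ly psdQ _ _; set phat := score qt y astar.
have [val [[yt [a [ad [oa val_eq]]]] val_min]] :=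
  exists_adv_opt_value Q qt phat (ltW C0) e0 ly.
exists val; split; [split | split; [split | by split; [exists yt, a |]]].
- have [u [v [yp [s [t [Rm feas]]]]]] := adv_milp_feasible ly psdQ ad oa.
  exists a, yt, (fun i => yt i * a i), u, v, yp, s, t, Rm.
  by rewrite (milp_obj_score _ _ (fun=> erefl)).
- move=> a' yt' z u v yp s t Rm /(milp_feasible_adv ly psdQ C0)[ad' oa' zE].
  by rewrite (milp_obj_score _ _ zE); exact: val_min.
- by move=> robust; rewrite -val_eq; exact: robust.
- by move=> val_gt0 yt' a' ad' oa'; apply: lt_le_trans val_gt0 (val_min _ _ ad' oa').
Qed.
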